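(* Let $k$ be a commutative ring, $G$ a group and $H=(H_g)_{g\in G}$ a Hopf $G$-coalgebra. Let $\underline M=(X,(M_x)_{x\in X})$ be a right $H$-Hopf module in $\mathcal{T}_k$ (with structure $f$, $\rho_{x,g}$ as described in the context), let $X_G$ be the set of $G$-orbits of $X$, and for $x\in X$ write $\overline{x}$ for its orbit. For each orbit $O\in X_G$ let $$M^{\mathrm{co}H}_O=\Bigl\{(m_y)_{y\in O}\in\prod_{y\in O}M_y\ \Big|\ \rho_{y,g}(m_{yg})=m_y\otimes 1_{H_g}\text{ for all }y\in O,\ g\in G\Bigr\},$$ and let $\underline{M}^{\mathrm{co}H}\otimes\underline H$ be the Turaev $k$-module $\bigl(X_G\times G,(M^{\mathrm{co}H}_O\otimes H_g)_{(O,g)}\bigr)$. Then the morphism in $\mathcal{T}_k$ $$\underline\phi=(\varphi,(\phi_x)_{x\in X}):\ \underline{M}^{\mathrm{co}H}\otimes\underline H\to\underline M,$$ with underlying map $\varphi:X\to X_G\times G$, $\varphi(x)=(\overline{x},f(x))$, and components $\phi_x:M^{\mathrm{co}H}_{\overline x}\otimes H_{f(x)}\to M_x$, $\phi_x\bigl((m_y)_{y\in\overline x}\otimes h\bigr)=m_x h$, is an isomorphism in $\mathcal{T}_k$.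
   Context: Let $k$ be a commutative ring. The Turaev category $\mathcal{T}_k$ has objects pairs $(X,M)$, $X$ a set, $M=(M_x)_{x\in X}$ a family of $k$-modules; a morphism $(X,M)\to(Y,N)$ is a pair $(f,\varphi)$ with $f:Y\to X$ a function and $\varphi_y:M_{f(y)}\to N_y$ $k$-linear maps; composition $(g,\psi)\circ(f,\varphi)=(f\circ g,(\psi_z\circ\varphi_{g(z)})_z)$. For a group $G$, a Hopf $G$-coalgebra is a family of $k$-algebras $(H_g)_{g\in G}$ (multiplication $\mu_g$, unit $1_{H_g}$) with algebra maps $\Delta_{g,h}:H_{gh}\to H_g\otimes H_h$, written $\Delta_{g,h}(h')=h'_{(1,g)}\otimes h'_{(2,h)}$, and an algebra map $\varepsilon:H_1\to k$, satisfying $(\Delta_{g,h}\otimes H_l)\Delta_{gh,l}=(H_g\otimes\Delta_{h,l})\Delta_{g,hl}$, $(H_g\otimes\varepsilon)\Delta_{g,1}=\mathrm{id}=(\varepsilon\otimes H_g)\Delta_{1,g}$, together with $k$-linear maps $S_g:H_{g^{-1}}\to H_g$ with $\mu_g(S_g\otimes H_g)\Delta_{g^{-1},g}=1_{H_g}\varepsilon=\mu_g(H_g\otimes S_g)\Delta_{g,g^{-1}}$. A right $H$-Hopf module in $\mathcal{T}_k$ is a Turaev $k$-module $(X,(M_x)_{x\in X})$ together with: a right action of $G$ on the set $X$; a map $f:X\to G$ with $f(xg)=f(x)g$ for all $x\in X,g\in G$; a right $H_{f(x)}$-module structure on each $M_x$; and $k$-linear maps $\rho_{x,g}:M_{xg}\to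 M_x\otimes H_g$, written $\rho_{x,g}(m)=m_{[0]}\otimes m_{[1]}$, such that for all $x\in X$, $g,h\in G$: $(M_x\otimes\varepsilon)\circ\rho_{x,1}=\mathrm{id}_{M_x}$; $(\rho_{x,g}\otimes H_h)\circ\rho_{xg,h}=(M_x\otimes\Delta_{g,h})\circ\rho_{x,gh}$; and for $m\in M_{xg}$ and $h'\in H_{f(xg)}=H_{f(x)g}$, $\rho_{x,g}(mh')=m_{[0]}h'_{(1,f(x))}\otimes m_{[1]}h'_{(2,g)}$. (This is exactly a Hopf module over the Hopf algebra $(G,H)$ in the symmetric monoidal category $\mathcal{T}_k$.) *)

From HB Require Import structures.
From mathcomp Require Import boolp.
From mathcomp Require Import all_boot all_algebra.

Set Implicit Arguments.
Unset Strict Implicit.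
Unset Printing Implicit Defensive.

Import GRing.Theory.
Local Open Scope ring_scope.

Definition tr (A : Type) (F : A -> Type) (a b : A) (e : a = b) (x : F a) : F b :=
  eq_rect a F x b e.
Arguments tr {A} F {a b} e x.

(* Elements are formal sums  sum_i m_i (x) n_i  (lists of pairs), two such  *)
(* sums being identified iff they have the same image under every k-bilinear*)
(* map into every k-module; this is exactly the usual tensor product.       *)
Section Tensor.
Variables (k : comPzRingType) (M N : lmodType k).

Definition bilinear_map (P : lmodType k) (b : M -> N -> P) : Prop :=
  (forall n, linear (fun m => b m n)) /\ (forall m, linear (b m)).

Definition tsum (P : lmodType k) (b : M -> N -> P) (s : seq (M * N)) : P :=
  \sum_(p <- s) b p.1 p.2.

Definition teq (s t : seq (M * N)) : Prop :=
  forall (P : lmodType k) (b : M -> N -> P), bilinear_map b -> tsum b s = tsum b t.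

Record tensor_type := TensorOf {
  tcls : seq (M * N) -> Prop;
  tclsP : exists s, tcls = teq s }.

HB.instance Definition _ := gen_eqMixin tensor_type.
HB.instance Definition _ := gen_choiceMixin tensor_type.

Definition tpi (s : seq (M * N)) : tensor_type := @TensorOf (teq s) (ex_intro _ s erefl).
Definition trepr (x : tensor_type) : seq (M * N) := proj1_sig (cid (tclsP x)).

Lemma teq_sym s t : teq s t -> teq t s.
Proof. by move=> h P b hb; rewrite (h P b hb). Qed.

Lemma teq_trans s t u : teq s t -> teq t u -> teq s u.
Proof. by move=> h1 h2 P b hb; rewrite (h1 P b hb) (h2 P b hb). Qed.

Lemma tpi_eq s t : tpi s = tpi t <-> teq s t.
Proof.
split.
  move=> /(congr1 tcls) /= e.
  have : teq t s by rewrite -e.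
  exact: teq_sym.
move=> h.
have e : teq s = teq t.
  apply: funext => u; rewrite propeqE; split => hu.
    exact: teq_trans (teq_sym h) hu.
  exact: teq_trans h hu.
rewrite /tpi; move: (ex_intro _ s _) (ex_intro _ t _).
rewrite e => p q; congr TensorOf; exact: Prop_irrelevance.
Qed.

Lemma tpiK x : tpi (trepr x) = x.
Proof.
case: x => c p; rewrite /trepr /tpi /=.
case: (cid p) => s /= e; move: p; rewrite e => p.
congr TensorOf; exact: Prop_irrelevance.
Qed.

Lemma tpi_surj x : exists s, x = tpi s.
Proof. by exists (trepr x); rewrite tpiK. Qed.

Lemma treprP s : teq (trepr (tpi s)) s.
Proof. by apply/tpi_eq; rewrite tpiK. Qed.

Section BilinFacts.
Variables (P : lmodType k) (b : M -> N -> P).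
Hypothesis hb : bilinear_map b.

Lemma bl_addl m m' n : b (m + m') n = b m n + b m' n.
Proof. exact: (GRing.semilinear_linear (hb.1 n)).2. Qed.

Lemma bl_scalel a m n : b (a *: m) n = a *: b m n.
Proof. exact: (GRing.semilinear_linear (hb.1 n)).1. Qed.

Lemma bl_oppl m n : b (- m) n = - b m n.
Proof. by rewrite -scaleN1r bl_scalel scaleN1r. Qed.

Lemma bl_0l n : b 0 n = 0.
Proof. by rewrite -(scale0r (0 : M)) bl_scalel scale0r. Qed.

Lemma tsum_cat s t : tsum b (s ++ t) = tsum b s + tsum b t.
Proof. exact: big_cat. Qed.

Lemma tsum_opp s : tsum b (map (fun p => (- p.1, p.2)) s) = - tsum b s.
Proof.
rewrite /tsum big_map -sumrN; apply: eq_bigr => p _; exact: bl_oppl.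
Qed.

Lemma tsum_scale a s : tsum b (map (fun p => (a *: p.1, p.2)) s) = a *: tsum b s.
Proof.
rewrite /tsum big_map scaler_sumr; apply: eq_bigr => p _; exact: bl_scalel.
Qed.
End BilinFacts.

Definition tzero : tensor_type := tpi [::].
Definition tadd (x y : tensor_type) : tensor_type := tpi (trepr x ++ trepr y).
Definition topp (x : tensor_type) : tensor_type :=
  tpi (map (fun p => (- p.1, p.2)) (trepr x)).
Definition tscale (a : k) (x : tensor_type) : tensor_type :=
  tpi (map (fun p => (a *: p.1, p.2)) (trepr x)).

Lemma taddE s t : tadd (tpi s) (tpi t) = tpi (s ++ t).
Proof.
apply/tpi_eq => P b hb.
by rewrite !tsum_cat // (treprP s hb) (treprP t hb).
Qed.

Lemma toppE s : topp (tpi s) = tpi (map (fun p => (- p.1, p.2)) s).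
Proof. by apply/tpi_eq => P b hb; rewrite !tsum_opp // (treprP s hb). Qed.

Lemma tscaleE a s : tscale a (tpi s) = tpi (map (fun p => (a *: p.1, p.2)) s).
Proof. by apply/tpi_eq => P b hb; rewrite !tsum_scale // (treprP s hb). Qed.

Lemma taddA : associative tadd.
Proof.
move=> x y z; case: (tpi_surj x) => s ->; case: (tpi_surj y) => t ->.
by case: (tpi_surj z) => u ->; rewrite !taddE catA.
Qed.

Lemma taddC : commutative tadd.
Proof.
move=> x y; case: (tpi_surj x) => s ->; case: (tpi_surj y) => t ->.
by rewrite !taddE; apply/tpi_eq => P b hb; rewrite !tsum_cat // addrC.
Qed.

Lemma tadd0 : left_id tzero tadd.
Proof. by move=> x; case: (tpi_surj x) => s ->; rewrite /tzero taddE. Qed.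

Lemma taddN : left_inverse tzero topp tadd.
Proof.
move=> x; case: (tpi_surj x) => s ->; rewrite toppE taddE.
apply/tpi_eq => P b hb; rewrite tsum_cat // tsum_opp // addNr.
by rewrite /tsum big_nil.
Qed.

HB.instance Definition _ :=
  GRing.isZmodule.Build tensor_type taddA taddC tadd0 taddN.

Lemma tscaleA a c x : tscale a (tscale c x) = tscale (a * c) x.
Proof.
case: (tpi_surj x) => s ->; rewrite !tscaleE.
by apply/tpi_eq => P b hb; rewrite !tsum_scale // scalerA.
Qed.

Lemma tscale1 x : tscale 1 x = x.
Proof.
case: (tpi_surj x) => s ->; rewrite !tscaleE.
by apply/tpi_eq => P b hb; rewrite !tsum_scale // scale1r.
Qed.

Lemma tscaleDr a x y : tscale a (tadd x y) = tadd (tscale a x) (tscale a y).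
Proof.
case: (tpi_surj x) => s ->; case: (tpi_surj y) => t ->.
by rewrite taddE !tscaleE taddE map_cat.
Qed.

Lemma tscaleDl x a c : tscale (a + c) x = tadd (tscale a x) (tscale c x).
Proof.
case: (tpi_surj x) => s ->; rewrite !tscaleE taddE.
by apply/tpi_eq => P b hb; rewrite tsum_cat // !tsum_scale // scalerDl.
Qed.

HB.instance Definition _ :=
  GRing.Zmodule_isLmodule.Build k tensor_type tscaleA tscale1 tscaleDr tscaleDl.

Definition tens (m : M) (n : N) : tensor_type := tpi [:: (m, n)].

Definition tlift (P : lmodType k) (b : M -> N -> P) (x : tensor_type) : P :=
  tsum b (trepr x).

Lemma tensZl a m n : tens (a *: m) n = a *: tens m n.
Proof.
by change (tpi [:: (a *: m, n)] = tscale a (tpi [:: (m, n)])); rewrite tscaleE.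
Qed.

Lemma tensDl m m' n : tens (m + m') n = tens m n + tens m' n.
Proof.
change (tpi [:: (m + m', n)] = tadd (tpi [:: (m, n)]) (tpi [:: (m', n)])).
rewrite taddE /=; apply/tpi_eq => P b hb.
by rewrite /tsum !big_cons !big_nil /= !addr0 bl_addl.
Qed.

Lemma tens0l n : tens 0 n = 0.
Proof. by rewrite -(scale0r (0 : M)) tensZl scale0r. Qed.

Lemma tensNl m n : tens (- m) n = - tens m n.
Proof. by rewrite -scaleN1r tensZl scaleN1r. Qed.

End Tensor.

Section TensorOps.
Variable k : comPzRingType.

Definition tmap (A B C D : lmodType k) (f : A -> C) (g : B -> D)
  (x : tensor_type A B) : tensor_type C D :=
  tlift (fun a b => tens (f a) (g b)) x.

Definition tassoc (A B C : lmodType k) (x : tensor_type (tensor_type A B) C) :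
  tensor_type A (tensor_type B C) :=
  tlift (fun (t : tensor_type A B) (c : C) => tlift (fun a b => tens a (tens b c)) t) x.

Definition tmul (A B : lmodType k) (muA : A -> A -> A) (muB : B -> B -> B)
  (x y : tensor_type A B) : tensor_type A B :=
  tlift (fun a b => tlift (fun c d => tens (muA a c) (muB b d)) y) x.

Definition is_kalg (A : lmodType k) (mu : A -> A -> A) (u : A) : Prop :=
  [/\ associative mu, left_id u mu, right_id u mu & bilinear_map mu].

End TensorOps.

Section Turaev.
Variable k : comPzRingType.

Definition tmor (X Y : Type) (M : X -> lmodType k) (N : Y -> lmodType k) :=
  {f : Y -> X & forall y, M (f y) -> N y}.

Definition tmor_linear X Y (M : X -> lmodType k) (N : Y -> lmodType k)
  (F : tmor M N) : Prop := forall y, linear (projT2 F y).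

(* composition  F' o F  (first F, then F') *)
Definition tcomp X Y Z (M : X -> lmodType k) (N : Y -> lmodType k)
  (P : Z -> lmodType k) (F : tmor M N) (F' : tmor N P) : tmor M P :=
  existT (fun g : Z -> X => forall z, M (g z) -> P z)
    (fun z => projT1 F (projT1 F' z))
    (fun z m => projT2 F' z (projT2 F (projT1 F' z) m)).

Definition tid X (M : X -> lmodType k) : tmor M M :=
  existT (fun g : X -> X => forall x, M (g x) -> M x) (fun x => x) (fun x m => m).

Definition tiso X Y (M : X -> lmodType k) (N : Y -> lmodType k) (F : tmor M N) : Prop :=
  tmor_linear F /\
  exists F' : tmor N M, tmor_linear F' /\ tcomp F F' = tid M /\ tcomp F' F = tid N.

End Turaev.

Record ractType (G : groupType) (X : Type) := RAct {
  ract :> X -> G -> X;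
  ract1 : forall x, ract x 1%g = x;
  ractM : forall x g h, ract (ract x g) h = ract x (g * h)%g }.

Section Orbits.
Variables (G : groupType) (X : Type) (a : ractType G X).

Definition orbit (x : X) : X -> Prop := fun y => exists g : G, y = a x g.

Definition orbits := {O : X -> Prop | exists x, O = orbit x}.

Definition orb (x : X) : orbits := exist _ (orbit x) (ex_intro _ x erefl).

Definition osub (O : orbits) := {y : X | proj1_sig O y}.

Lemma osub_act (O : orbits) (y : osub O) (g : G) : proj1_sig O (a (proj1_sig y) g).
Proof.
move: O y => [P hP] [y Py] /=; move: Py => /= Py.
case: hP => x eP; subst P; case: Py => g0 ->.
by exists (g0 * g)%g; rewrite ractM.
Qed.

Definition oact (O : orbits) (y : osub O) (g : G) : osub O :=
  exist _ (a (proj1_sig y) g) (osub_act y g).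

Definition xin (x : X) : osub (orb x) :=
  exist (fun y => orbit x y) x (ex_intro _ 1%g (esym (ract1 a x))).

End Orbits.

Record is_hopf_G_coalgebra (k : comPzRingType) (G : groupType)
  (H : G -> lmodType k) (mu : forall g, H g -> H g -> H g) (one : forall g, H g)
  (Delta : forall g h : G, {linear H (g * h)%g -> tensor_type (H g) (H h)})
  (eps : {linear H 1%g -> k^o}) (S : forall g : G, {linear H (g^-1)%g -> H g}) : Prop := {
  hc_alg : forall g, is_kalg (mu g) (one g);
  hc_Delta_mul : forall g h (x y : H (g * h)%g),
    Delta g h (mu _ x y) = tmul (mu g) (mu h) (Delta g h x) (Delta g h y);
  hc_Delta_one : forall g h, Delta g h (one _) = tens (one g) (one h);
  hc_eps_mul : forall x y : H 1%g, eps (mu _ x y) = (eps x : k) * eps y;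
  hc_eps_one : (eps (one 1%g) : k) = 1;
  hc_coassoc : forall g h l (x : H (g * h * l)%g),
    tassoc (tmap (Delta g h) (fun z : H l => z) (Delta (g * h)%g l x))
    = tmap (fun z : H g => z) (Delta h l) (Delta g (h * l)%g (tr H (esym (mulgA g h l)) x));
  hc_counit_r : forall g (x : H g),
    tlift (fun (p : H g) (q : H 1%g) => (eps q : k) *: p)
      (Delta g 1%g (tr H (esym (mulg1 g)) x)) = x;
  hc_counit_l : forall g (x : H g),
    tlift (fun (p : H 1%g) (q : H g) => (eps p : k) *: q)
      (Delta 1%g g (tr H (esym (mul1g g)) x)) = x;
  hc_antipode_l : forall g (x : H 1%g),
    tlift (fun (p : H (g^-1)%g) (q : H g) => mu g (S g p) q)
      (Delta (g^-1)%g g (tr H (esym (mulVg g)) x)) = (eps x : k) *: one g;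
  hc_antipode_r : forall g (x : H 1%g),
    tlift (fun (p : H g) (q : H (g^-1)%g) => mu g p (S g q))
      (Delta g (g^-1)%g (tr H (esym (mulgV g)) x)) = (eps x : k) *: one g }.

Record is_hopf_module (k : comPzRingType) (G : groupType)
  (H : G -> lmodType k) (mu : forall g, H g -> H g -> H g) (one : forall g, H g)
  (Delta : forall g h : G, {linear H (g * h)%g -> tensor_type (H g) (H h)})
  (eps : {linear H 1%g -> k^o})
  (X : Type) (a : ractType G X) (f : X -> G) (M : X -> lmodType k)
  (mact : forall x, M x -> H (f x) -> M x)
  (rho : forall x g, {linear M (a x g) -> tensor_type (M x) (H g)}) : Prop := {
  hm_f : forall x g, f (a x g) = (f x * g)%g;
  hm_mod_assoc : forall x (m : M x) (p q : H (f x)),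
    mact x m (mu _ p q) = mact x (mact x m p) q;
  hm_mod_unit : forall x (m : M x), mact x m (one _) = m;
  hm_mod_bilin : forall x, bilinear_map (mact x);
  hm_counit : forall x (m : M x),
    tlift (fun (m0 : M x) (q : H 1%g) => (eps q : k) *: m0)
      (rho x 1%g (tr M (esym (ract1 a x)) m)) = m;
  hm_coassoc : forall x g h (m : M (a (a x g) h)),
    tassoc (tmap (rho x g) (fun z : H h => z) (rho (a x g) h m))
    = tmap (fun z : M x => z) (Delta g h) (rho x (g * h)%g (tr M (ractM a x g h) m));
  hm_compat : forall x g (m : M (a x g)) (h' : H (f (a x g))),
    rho x g (mact _ m h')
    = tlift (fun (m0 : M x) (m1 : H g) =>
         tlift (fun (p : H (f x)) (q : H g) => tens (mact x m0 p) (mu g m1 q))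
           (Delta (f x) g (tr H (hm_f x g) h')))
        (rho x g m) }.

Section Coinvariants.
Variables (k : comPzRingType) (G : groupType) (X : Type) (a : ractType G X).
Variables (M : X -> lmodType k) (H : G -> lmodType k) (one : forall g, H g).
Variable rho : forall x g, {linear M (a x g) -> tensor_type (M x) (H g)}.
Variable O : orbits a.

Definition coinvariant (m : forall y : osub O, M (proj1_sig y)) : Prop :=
  forall (y : osub O) (g : G), rho (proj1_sig y) g (m (oact y g)) = tens (m y) (one g).

Record coinv := CoInv {
  cval : forall y : osub O, M (proj1_sig y);
  cvalP : coinvariant cval }.

HB.instance Definition _ := gen_eqMixin coinv.
HB.instance Definition _ := gen_choiceMixin coinv.

Lemma coinv_eq (u v : coinv) : (forall y, cval u y = cval v y) -> u = v.
Proof.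
case: u v => [cu pu] [cv pv] /= h.
have e : cu = cv by apply: functional_extensionality_dep.
by move: pu pv; rewrite e => pu pv; congr CoInv; exact: Prop_irrelevance.
Qed.

Lemma czero_subproof : coinvariant (fun y => 0).
Proof. by move=> y g; rewrite linear0 tens0l. Qed.

Lemma cadd_subproof (u v : coinv) : coinvariant (fun y => cval u y + cval v y).
Proof. by move=> y g; rewrite linearD (cvalP u) (cvalP v) tensDl. Qed.

Lemma cscale_subproof (c : k) (u : coinv) : coinvariant (fun y => c *: cval u y).
Proof. by move=> y g; rewrite linearZ (cvalP u) tensZl. Qed.

Lemma copp_subproof (u : coinv) : coinvariant (fun y => - cval u y).
Proof. by move=> y g; rewrite linearN (cvalP u) tensNl. Qed.

Definition czero := CoInv czero_subproof.
Definition cadd u v := CoInv (cadd_subproof u v).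
Definition copp u := CoInv (copp_subproof u).
Definition cscale c u := CoInv (cscale_subproof c u).

Lemma caddA : associative cadd.
Proof. by move=> u v w; apply: coinv_eq => y /=; rewrite addrA. Qed.
Lemma caddC : commutative cadd.
Proof. by move=> u v; apply: coinv_eq => y /=; rewrite addrC. Qed.
Lemma cadd0 : left_id czero cadd.
Proof. by move=> u; apply: coinv_eq => y /=; rewrite add0r. Qed.
Lemma caddN : left_inverse czero copp cadd.
Proof. by move=> u; apply: coinv_eq => y /=; rewrite addNr. Qed.

HB.instance Definition _ := GRing.isZmodule.Build coinv caddA caddC cadd0 caddN.

Lemma cscaleA c d u : cscale c (cscale d u) = cscale (c * d) u.
Proof. by apply: coinv_eq => y /=; rewrite scalerA. Qed.
Lemma cscale1 u : cscale 1 u = u.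
Proof. by apply: coinv_eq => y /=; rewrite scale1r. Qed.
Lemma cscaleDr c u v : cscale c (cadd u v) = cadd (cscale c u) (cscale c v).
Proof. by apply: coinv_eq => y /=; rewrite scalerDr. Qed.
Lemma cscaleDl u c d : cscale (c + d) u = cadd (cscale c u) (cscale d u).
Proof. by apply: coinv_eq => y /=; rewrite scalerDl. Qed.

HB.instance Definition _ :=
  GRing.Zmodule_isLmodule.Build k coinv cscaleA cscale1 cscaleDr cscaleDl.

End Coinvariants.

Section Phi.
Variables (k : comPzRingType) (G : groupType) (H : G -> lmodType k).
Variable one : forall g, H g.
Variables (X : Type) (a : ractType G X) (f : X -> G) (M : X -> lmodType k).
Variable mact : forall x, M x -> H (f x) -> M x.
Variable rho : forall x g, {linear M (a x g) -> tensor_type (M x) (H g)}.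

Definition coinvH (p : orbits a * G) : lmodType k :=
  tensor_type (coinv one rho p.1) (H p.2).

Definition hopf_phi : tmor coinvH M :=
  existT (fun phi : X -> orbits a * G => forall x, coinvH (phi x) -> M x)
    (fun x => (orb a x, f x))
    (fun x (t : tensor_type (coinv one rho (orb a x)) (H (f x))) =>
       tlift (fun (c : coinv one rho (orb a x)) (h : H (f x)) =>
                @mact x (cval c (xin a x)) h) t).

End Phi.

From Pilot Require Import Defs.
From mathcomp Require Import boolp.
From mathcomp Require Import all_boot all_algebra.

Set Implicit Arguments.
Unset Strict Implicit.
Unset Printing Implicit Defensive.
Import GRing.Theory.
Local Open Scope ring_scope.

(* The inverse of phi sends m in M_x to P(m_[0]) ⊗ m_[1], where the coaction
   rho_{x f(x)^-1, f(x)} splits m through the point x f(x)^-1 of the orbit of x, at which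
   f takes the value 1, and P(n)_y = n_[0] S(n_[1]) is computed with rho_{y, f(y)^-1};
   the point y f(y)^-1 is the same for every y of the orbit.  The family P(n) is
   coinvariant because the antipode is anti-comultiplicative; phi o phi^-1 = id by
   coassociativity, the antipode and the counit, and phi^-1 o phi = id because
   P(c_{x f(x)^-1} h) = eps(h) c for a coinvariant family c.  On indices, x |-> (orbit x, f x)
   is inverted by (O, g) |-> x_O f(x_O)^-1 g for a chosen representative x_O of O. *)

Section Transport.
Variables (A : Type) (F : A -> Type).

Lemma tr_irrelevance (a b : A) (e1 e2 : a = b) (x : F a) : tr F e1 x = tr F e2 x.
Proof. by rewrite (Prop_irrelevance e1 e2). Qed.

Lemma tr_trans (a b c : A) (e1 : a = b) (e2 : b = c) (x : F a) :
  tr F e2 (tr F e1 x) = tr F (etrans e1 e2) x.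
Proof. by case: c / e2; case: b / e1. Qed.

Lemma tr_id (a : A) (e : a = a) (x : F a) : tr F e x = x.
Proof. by rewrite (tr_irrelevance e erefl). Qed.

End Transport.

Lemma tr_lin (k : comPzRingType) (A : Type) (F : A -> lmodType k) (a b : A) (e : a = b) :
  linear (tr F e).
Proof. by case: b / e. Qed.

Lemma tmor_eq (k : comPzRingType) (A B : Type) (N1 : A -> lmodType k)
  (N2 : B -> lmodType k) (p1 p2 : B -> A) (c1 : forall y, N1 (p1 y) -> N2 y)
  (c2 : forall y, N1 (p2 y) -> N2 y) (h : forall y, p1 y = p2 y) :
  (forall y m, c2 y (tr N1 (h y) m) = c1 y m) ->
  existT _ p1 c1 = existT _ p2 c2 :> tmor N1 N2.
Proof.
have E : p1 = p2 by apply: funext.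
subst p2 => hc; congr (existT _ p1 _).
apply: functional_extensionality_dep => y; apply: funext => m.
by rewrite -hc tr_id.
Qed.

Section OrbitRepresentatives.
Context {G : groupType} {X : Type} {a : ractType G X}.

Lemma orbit_ract (x : X) (h : G) : Defs.orbit a (a x h) = Defs.orbit a x.
Proof.
apply: funext => y; apply: propext; split => [[g ->]|[g ->]].
  by exists (h * g)%g; rewrite (ractM a).
by exists (h^-1 * g)%g; rewrite (ractM a) mulVKg.
Qed.

Definition orbit_rep (O : orbits a) : X := proj1_sig (cid (proj2_sig O)).

Lemma orbit_repP (O : orbits a) : proj1_sig O = Defs.orbit a (orbit_rep O).
Proof. exact: (proj2_sig (cid (proj2_sig O))). Qed.

End OrbitRepresentatives.

Section TensorCalculus.
Variable k : comPzRingType.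
Implicit Types M N P Q U W : lmodType k.

Lemma lin_comp M N P (F : N -> P) (G : M -> N) :
  linear F -> linear G -> linear (fun x => F (G x)).
Proof. by move=> hF hG c u v; rewrite hG hF. Qed.

Lemma lin_id M : linear (fun x : M => x).
Proof. by []. Qed.

Lemma lin_add M P (F : M -> P) : linear F -> {morph F : u v / u + v}.
Proof. by move=> hF u v; have := hF 1 u v; rewrite !scale1r. Qed.

Lemma lin_scale M P (F : M -> P) : linear F -> forall c u, F (c *: u) = c *: F u.
Proof. by move=> hF; exact: (GRing.semilinear_linear hF).1. Qed.

Lemma lin_sum M P (F : M -> P) (I : Type) (s : seq I) (G : I -> M) :
  linear F -> F (\sum_(i <- s) G i) = \sum_(i <- s) F (G i).
Proof.
move=> hF; apply: big_morph; first exact: lin_add.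
by rewrite -(scale0r 0) lin_scale // scale0r.
Qed.

Lemma scale_lin_l U M (F : U -> k^o) (m : M) :
  linear F -> linear (fun x => (F x : k) *: m).
Proof. by move=> h c u v; rewrite h scalerDl scalerA. Qed.

Lemma scale_lin_r U M (c : k) (F : U -> M) :
  linear F -> linear (fun x => c *: F x).
Proof. by move=> h a u v; rewrite h scalerDr !scalerA mulrC. Qed.

Lemma tpi_sum M N (s : seq (M * N)) : tpi s = \sum_(p <- s) tens p.1 p.2.
Proof.
elim: s => [|p s IH]; first by rewrite big_nil.
rewrite big_cons -IH; change (tpi (p :: s) = tadd (tpi [:: (p.1, p.2)]) (tpi s)).
by rewrite taddE; case: p.
Qed.

Lemma tlift_tens M N P (b : M -> N -> P) m n :
  bilinear_map b -> tlift b (tens m n) = b m n.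
Proof. by move=> hb; rewrite /tlift (treprP _ hb) /tsum big_seq1. Qed.

Lemma tlift_lin M N P (b : M -> N -> P) : bilinear_map b -> linear (tlift b).
Proof.
move=> hb c x y; case: (tpi_surj x) => s ->; case: (tpi_surj y) => t ->.
change (tlift b (tadd (tscale c (tpi s)) (tpi t)) = c *: tlift b (tpi s) + tlift b (tpi t)).
by rewrite tscaleE taddE /tlift !(treprP _ hb) tsum_cat // tsum_scale.
Qed.

Lemma tlift_comp M N P Q (b : M -> N -> P) (F : P -> Q) x :
  linear F -> F (tlift b x) = tlift (fun m n => F (b m n)) x.
Proof. by move=> hF; rewrite /tlift /tsum lin_sum. Qed.

Lemma tlift_param_lin M N P Q (T : Q -> M -> N -> P) x :
  (forall m n, linear (fun v => T v m n)) -> linear (fun v => tlift (T v) x).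
Proof.
move=> hT c u v; rewrite /tlift /tsum scaler_sumr -big_split /=.
by apply: eq_bigr => p _; rewrite hT.
Qed.

Lemma eq_tlift M N P (b b' : M -> N -> P) x :
  (forall m n, b m n = b' m n) -> tlift b x = tlift b' x.
Proof. by move=> h; rewrite /tlift /tsum; apply: eq_bigr => p _; rewrite h. Qed.

Lemma tens_lin_l M N (n : N) : linear (fun m : M => tens m n).
Proof. by move=> c u v; rewrite tensDl tensZl. Qed.

Lemma tens_lin_r M N (m : M) : linear (fun n : N => tens m n).
Proof.
move=> c u v.
change (tpi [:: (m, c *: u + v)] = tadd (tscale c (tpi [:: (m, u)])) (tpi [:: (m, v)])).
rewrite tscaleE taddE /=; apply/tpi_eq => P b hb.
by rewrite /tsum !big_cons !big_nil /= !addr0 hb.2 (lin_scale (hb.1 u)).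
Qed.

Lemma bilinear_lin_l M N P (b : M -> N -> P) (n : N) :
  bilinear_map b -> linear (fun m => b m n).
Proof. by case=> + _; apply. Qed.

Lemma bilinear_lin_r M N P (b : M -> N -> P) (m : M) :
  bilinear_map b -> linear (b m).
Proof. by case=> _; apply. Qed.

Lemma tensZr M N (m : M) (c : k) (n : N) : tens m (c *: n) = c *: tens m n.
Proof. exact: lin_scale (tens_lin_r m) c n. Qed.

Lemma tensor_lin_ext M N P (F G : tensor_type M N -> P) x :
  linear F -> linear G -> (forall m n, F (tens m n) = G (tens m n)) -> F x = G x.
Proof.
move=> hF hG h; case: (tpi_surj x) => s ->; rewrite tpi_sum.
by rewrite !lin_sum //; apply: eq_bigr => p _; exact: h.
Qed.

Definition trilinear_map M N Q P (T : M -> N -> Q -> P) : Prop :=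
  [/\ forall q r, linear (fun p => T p q r), forall p r, linear (fun q => T p q r)
    & forall p q, linear (T p q)].

Lemma tassoc_bilin M N P :
  bilinear_map (fun (t : tensor_type M N) (c : P) => tlift (fun m n => tens m (tens n c)) t).
Proof.
split=> [c|t].
  apply: tlift_lin; split=> [n|m]; first exact: tens_lin_l.
  by apply: (lin_comp (tens_lin_r m)); exact: tens_lin_l.
apply: tlift_param_lin => m n; exact: (lin_comp (tens_lin_r m) (tens_lin_r n)).
Qed.

Lemma tassoc_tens M N P (t : tensor_type M N) (c : P) :
  tassoc (tens t c) = tlift (fun m n => tens m (tens n c)) t.
Proof. exact: tlift_tens (tassoc_bilin M N P). Qed.

Lemma tassoc_lin M N P : linear (@tassoc k M N P).
Proof. exact: tlift_lin (tassoc_bilin M N P). Qed.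

Lemma tlift_coassoc M N Q U W P (d1 : U -> tensor_type M N) (d3 : W -> tensor_type N Q)
  (y : tensor_type U Q) (z : tensor_type M W) (T : M -> N -> Q -> P) :
  linear d1 -> linear d3 -> trilinear_map T ->
  tassoc (tmap d1 (fun r => r) y) = tmap (fun p => p) d3 z ->
  tlift (fun u r => tlift (fun p q => T p q r) (d1 u)) y
  = tlift (fun p w => tlift (fun q r => T p q r) (d3 w)) z.
Proof.
move=> hd1 hd3 [hT1 hT2 hT3] e.
pose L := tlift (fun p t => tlift (fun q r => T p q r) t).
have hbL : bilinear_map (fun p t => tlift (fun q r => T p q r) t).
  split=> [t|p]; first by apply: tlift_param_lin => q r; exact: hT1.
  by apply: tlift_lin; split=> [r|q]; [exact: hT2|exact: hT3].
have hL : linear L by apply: tlift_lin.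
have LE p q r : L (tens p (tens q r)) = T p q r.
  by rewrite /L !tlift_tens.
have := congr1 L e; rewrite /tmap.
rewrite (tlift_comp _ _ (@tassoc_lin _ _ _)) !(tlift_comp _ _ hL) => e'.
apply: etrans (etrans _ e') _.
  apply: eq_tlift => u r; rewrite tassoc_tens (tlift_comp _ _ hL).
  by apply: eq_tlift => p q; rewrite LE.
by apply: eq_tlift => p w; rewrite /L tlift_tens.
Qed.

Section TensorMul.
Variables (A B : lmodType k) (muA : A -> A -> A) (muB : B -> B -> B).
Hypotheses (muA_bilin : bilinear_map muA) (muB_bilin : bilinear_map muB).

Lemma tmul_tens_bilin a b : bilinear_map (fun c d => tens (muA a c) (muB b d)).
Proof.
split=> [d|c]; first exact: (lin_comp (tens_lin_l _) (muA_bilin.2 a)).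
exact: (lin_comp (tens_lin_r _) (muB_bilin.2 b)).
Qed.

Lemma tmul_inner_bilin y :
  bilinear_map (fun a b => tlift (fun c d => tens (muA a c) (muB b d)) y).
Proof.
split=> [b|a]; apply: tlift_param_lin => c d.
  exact: (lin_comp (tens_lin_l _) (muA_bilin.1 c)).
exact: (lin_comp (tens_lin_r _) (muB_bilin.1 d)).
Qed.

Lemma tmul_lin_l y : linear (fun x => tmul muA muB x y).
Proof. exact: (tlift_lin (tmul_inner_bilin y)). Qed.

Lemma tmul_lin_r x : linear (tmul muA muB x).
Proof. by apply: tlift_param_lin => a b; exact: (tlift_lin (tmul_tens_bilin a b)). Qed.

Lemma tmul_tens a b c d : tmul muA muB (tens a b) (tens c d) = tens (muA a c) (muB b d).
Proof. by rewrite /tmul !tlift_tens //; [exact: tmul_tens_bilin|exact: tmul_inner_bilin]. Qed.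

End TensorMul.

End TensorCalculus.

(* [linsolve] proves linearity goals by decomposing the map through [tens], [tlift],
   [tmul] and scalings down to maps registered in the hint database [linearity]. *)
Create HintDb linearity.

Ltac linear_fact := solve [exact: linearP | auto with linearity].
Ltac bilinear_fact := solve [assumption | auto with linearity].

Ltac linsolve :=
  cbv beta;
  match goal with
  | |- GRing.linear_for _ (fun x => x) => exact: lin_id
  | |- GRing.linear_for _ (fun x => tens (@?F x) ?n) =>
      apply: (lin_comp (G := F) (tens_lin_l n)); linsolve
  | |- GRing.linear_for _ (fun x => tens ?m (@?F x)) =>
      apply: (lin_comp (G := F) (tens_lin_r m)); linsolve
  | |- GRing.linear_for _ (fun x => tlift ?b (@?F x)) =>
      apply: (lin_comp (F := tlift b) (G := F)); [apply: tlift_lin; bilsolve | linsolve]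
  | |- GRing.linear_for _ (fun x => tlift (@?T x) ?t) =>
      apply: tlift_param_lin => ? ?; linsolve
  | |- GRing.linear_for _ (fun x => tmul ?mA ?mB (@?F x) ?y) =>
      apply: (lin_comp (F := fun z => tmul mA mB z y) (G := F));
      [apply: tmul_lin_l; bilinear_fact | linsolve]
  | |- GRing.linear_for _ (fun x => tmul ?mA ?mB ?y (@?F x)) =>
      apply: (lin_comp (F := tmul mA mB y) (G := F));
      [apply: tmul_lin_r; bilinear_fact | linsolve]
  | |- GRing.linear_for _ (fun x => GRing.scale (@?F x) ?m) =>
      apply: (scale_lin_l (F := F)); linsolve
  | |- GRing.linear_for _ (fun x => GRing.scale ?c (@?F x)) =>
      apply: (scale_lin_r c (F := F)); linsolve
  | |- GRing.linear_for _ (fun x => ?b (@?F x) ?n) =>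
      apply: (lin_comp (F := fun y => b y n) (G := F));
      [apply: bilinear_lin_l; bilinear_fact | linsolve]
  | |- GRing.linear_for _ (fun x => ?b ?m (@?F x)) =>
      apply: (lin_comp (F := b m) (G := F));
      [apply: bilinear_lin_r; bilinear_fact | linsolve]
  | |- GRing.linear_for _ (fun x => ?f (@?F x)) =>
      apply: (lin_comp (F := f) (G := F)); [linear_fact | linsolve]
  | |- GRing.linear_for _ (tlift ?b) => apply: tlift_lin; bilsolve
  | |- GRing.linear_for _ (tens ?m) => exact: tens_lin_r
  | |- GRing.linear_for _ (tmul ?mA ?mB ?y) => apply: tmul_lin_r; bilinear_fact
  | |- GRing.linear_for _ _ => linear_fact
  end
with bilsolve :=
  cbv beta;
  match goal with
  | |- bilinear_map _ => split => ?; linsolve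
  | |- trilinear_map _ => split => ? ?; linsolve
  end.

Section TensorAlgebra.
Variables (k : comPzRingType) (A B : lmodType k) (muA : A -> A -> A) (muB : B -> B -> B).
Variables (uA : A) (uB : B).
Hypotheses (hA : is_kalg muA uA) (hB : is_kalg muB uB).

Let muA_bilin : bilinear_map muA. Proof. by case: hA. Qed.
Let muB_bilin : bilinear_map muB. Proof. by case: hB. Qed.

#[local] Hint Extern 0 => exact: muA_bilin : linearity.
#[local] Hint Extern 0 => exact: muB_bilin : linearity.

Let tmul_tensE := tmul_tens muA_bilin muB_bilin.

Lemma tmulA : associative (tmul muA muB).
Proof.
case: hA hB => aA _ _ _ [aB _ _ _] x y z.
apply: (@tensor_lin_ext _ _ _ _ (fun x => tmul muA muB x (tmul muA muB y z))
          (fun x => tmul muA muB (tmul muA muB x y) z)) => [||a b]; try linsolve.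
apply: (@tensor_lin_ext _ _ _ _ (fun y => tmul muA muB (tens a b) (tmul muA muB y z))
          (fun y => tmul muA muB (tmul muA muB (tens a b) y) z)) => [||c d]; try linsolve.
rewrite tmul_tensE.
apply: (@tensor_lin_ext _ _ _ _ (fun z => tmul muA muB (tens a b) (tmul muA muB (tens c d) z))
          (tmul muA muB (tens (muA a c) (muB b d)))) => [||e g]; try linsolve.
by rewrite !tmul_tensE aA aB.
Qed.

Lemma tmul1t : left_id (tens uA uB) (tmul muA muB).
Proof.
case: hA hB => _ lA _ _ [_ lB _ _] y.
apply: (@tensor_lin_ext _ _ _ _ (tmul muA muB (tens uA uB)) id) => [||c d]; try linsolve.
by rewrite tmul_tensE lA lB.
Qed.

Lemma tmult1 : right_id (tens uA uB) (tmul muA muB).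
Proof.
case: hA hB => _ _ rA _ [_ _ rB _] y.
apply: (@tensor_lin_ext _ _ _ _ (fun x => tmul muA muB x (tens uA uB)) id) => [||c d];
  try linsolve.
by rewrite tmul_tensE rA rB.
Qed.

End TensorAlgebra.

(* Keeps the group index of the section variables [mu], [one] and [S] explicit. *)
Unset Implicit Arguments.

Section HopfGCoalgebra.
Variables (k : comPzRingType) (G : groupType)
  (H : G -> lmodType k) (mu : forall g, H g -> H g -> H g) (one : forall g, H g)
  (Delta : forall g h : G, {linear H (g * h)%g -> tensor_type (H g) (H h)})
  (eps : {linear H 1%g -> GRing.regular k})
  (S : forall g : G, {linear H (g^-1)%g -> H g}).
Hypothesis HH : @is_hopf_G_coalgebra k G H mu one Delta eps S.

Lemma mu_bilin g : bilinear_map (mu g).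
Proof. by case: (hc_alg HH g). Qed.

#[local] Hint Extern 0 => exact: mu_bilin : linearity.
#[local] Hint Extern 0 => exact: tr_lin : linearity.

(* The Hopf axioms relate coproducts at indices that are only propositionally equal,
   such as (g h) l and g (h l); [Delta_at e] is Delta_{g,h} read at any u with
   e : g h = u, and the axioms are restated below for arbitrary such proofs. *)
Definition Delta_at {g h u : G} (e : (g * h)%g = u) (x : H u) : tensor_type (H g) (H h) :=
  Delta g h (tr H (esym e) x).

Lemma Delta_at_lin {g h u} (e : (g * h)%g = u) : linear (Delta_at e).
Proof. rewrite /Delta_at; linsolve. Qed.

#[local] Hint Extern 0 => exact: Delta_at_lin : linearity.

Lemma Delta_atE {g h} (e : (g * h)%g = (g * h)%g) x : Delta_at e x = Delta g h x.
Proof. by rewrite /Delta_at tr_id. Qed.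

Lemma tlift_Delta_at_tr_r (P : lmodType k) {g h h' u} (e1 : h = h') (e : (g * h)%g = u)
  (e' : (g * h')%g = u) x (B : H g -> H h' -> P) :
  tlift (fun p q => B p (tr H e1 q)) (Delta_at e x) = tlift B (Delta_at e' x).
Proof. by subst h'; rewrite (Prop_irrelevance e e'). Qed.

Lemma Delta_at_coassoc (P : lmodType k) {g h l u v w} (e1 : (g * h)%g = u)
  (e2 : (u * l)%g = v) (e3 : (h * l)%g = w) (e4 : (g * w)%g = v) x
  (T : H g -> H h -> H l -> P) :
  trilinear_map T ->
  tlift (fun p' r => tlift (fun p q => T p q r) (Delta_at e1 p')) (Delta_at e2 x)
  = tlift (fun p w' => tlift (fun q r => T p q r) (Delta_at e3 w')) (Delta_at e4 x).
Proof.
move=> hT; case: u / e1 e2 => e2; case: w / e3 e4 => e4; case: v / e2 e4 x => e4 x.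
apply: tlift_coassoc => //; try exact: Delta_at_lin.
have DE g' h' : Delta_at (erefl (g' * h')%g) = Delta g' h' :> (_ -> _).
  by apply: funext => p; exact: Delta_atE.
rewrite !DE /Delta_at (tr_irrelevance (esym e4) (esym (mulgA g h l))).
exact: (hc_coassoc HH).
Qed.

Lemma Delta_at_counit_r {g h u} (e : (g * h)%g = u) (e1 : h = 1%g) (e2 : g = u) (x : H u) :
  tlift (fun p q => (eps (tr H e1 q) : k) *: p) (Delta_at e x) = tr H (esym e2) x.
Proof.
case: u / e2 e x => e x; subst h; rewrite tr_id -{2}(hc_counit_r HH x) /Delta_at.
by rewrite (tr_irrelevance (esym e) (esym (mulg1 g))).
Qed.

Lemma Delta_at_counit_l {g h u} (e : (g * h)%g = u) (e1 : g = 1%g) (e2 : h = u) (x : H u) :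
  tlift (fun p q => (eps (tr H e1 p) : k) *: q) (Delta_at e x) = tr H (esym e2) x.
Proof.
case: u / e2 e x => e x; subst g; rewrite tr_id -{2}(hc_counit_l HH x) /Delta_at.
by rewrite (tr_irrelevance (esym e) (esym (mul1g h))).
Qed.

Lemma Delta_at_antipode_l {g u} (e : (g^-1 * g)%g = u) (e2 : u = 1%g) (x : H u) :
  tlift (fun p q => mu g (S g p) q) (Delta_at e x) = (eps (tr H e2 x) : k) *: one g.
Proof.
case: u / e e2 x => e2 x.
by rewrite -(hc_antipode_l HH g (tr H e2 x)) Delta_atE tr_trans tr_id.
Qed.

Lemma Delta_at_antipode_r {g u} (e : (g * g^-1)%g = u) (e2 : u = 1%g) (x : H u) :
  tlift (fun p q => mu g p (S g q)) (Delta_at e x) = (eps (tr H e2 x) : k) *: one g.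
Proof.
case: u / e e2 x => e2 x.
by rewrite -(hc_antipode_r HH g (tr H e2 x)) Delta_atE tr_trans tr_id.
Qed.


Lemma Delta_antipode_r_absorb (P : lmodType k) (b c d : G) (e0 : (b^-1 * c)%g = d)
  (e' : (b * d)%g = c) (F : H c -> H b -> P) (w : H (b * d)%g) :
  bilinear_map F ->
  tlift (fun m1 q => tlift (fun q1 q2 => F q2 (mu b m1 (S b q1))) (Delta_at e0 q))
    (Delta b d w)
  = F (tr H e' w) (one b).
Proof.
move=> hF.
have e2 : (b * b^-1 * c)%g = (b * d)%g by rewrite -mulgA e0.
rewrite -(Delta_atE (erefl _) w).
rewrite -(Delta_at_coassoc _ (erefl (b * b^-1)%g) e2 e0 (erefl _)); last by bilsolve.
transitivity (tlift (fun t q2 => (eps (tr H (mulgV b) t) : k) *: F q2 (one b))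
                (Delta_at e2 w)).
  apply: eq_tlift => t q2.
  rewrite -(tlift_comp _ _ (bilinear_lin_r q2 hF)) (Delta_at_antipode_r _ (mulgV b)).
  by rewrite (lin_scale (bilinear_lin_r q2 hF)).
transitivity (F (tlift (fun t q2 => (eps (tr H (mulgV b) t) : k) *: q2) (Delta_at e2 w))
                (one b)).
  rewrite (tlift_comp _ _ (bilinear_lin_l (one b) hF)); apply: eq_tlift => t q2.
  by rewrite (lin_scale (bilinear_lin_l (one b) hF)).
by rewrite (Delta_at_counit_l _ (mulgV b) (esym e')) esymK.
Qed.

Section AntipodeAntiComultiplicative.
Variables (a b : G).

Notation mulT := (tmul (mu a) (mu b)).

Definition Delta_antipode (q : H ((a * b)^-1)%g) : tensor_type (H a) (H b) :=
  Delta a b (S (a * b)%g q).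

Definition antipode_tens_flip (q : H ((a * b)^-1)%g) : tensor_type (H a) (H b) :=
  tlift (fun q1 q2 => tens (S a q2) (S b q1)) (Delta_at (esym (invgM a b)) q).

Lemma Delta_antipode_lin : linear Delta_antipode.
Proof. rewrite /Delta_antipode; linsolve. Qed.

Lemma antipode_tens_flip_lin : linear antipode_tens_flip.
Proof. rewrite /antipode_tens_flip; linsolve. Qed.

#[local] Hint Extern 0 => exact: Delta_antipode_lin : linearity.
#[local] Hint Extern 0 => exact: antipode_tens_flip_lin : linearity.

Lemma Delta_antipode_convl (r : H ((a * b)^-1 * (a * b))%g) :
  tlift (fun q p => mulT (Delta_antipode q) (Delta a b p)) (Delta_at (erefl _) r)
  = (eps (tr H (mulVg (a * b)%g) r) : k) *: tens (one a) (one b).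
Proof.
transitivity (tlift (fun q p => Delta a b (mu (a * b)%g (S (a * b)%g q) p))
                (Delta_at (erefl _) r)).
  by apply: eq_tlift => q p; rewrite /Delta_antipode (hc_Delta_mul HH).
rewrite -(tlift_comp _ _ (linearP (Delta a b))) (Delta_at_antipode_l _ (mulVg (a * b)%g)).
by rewrite linearZ /= (hc_Delta_one HH).
Qed.

Lemma Delta_antipode_convr (r : H ((a * b) * (a * b)^-1)%g) :
  tlift (fun p s => mulT (Delta a b p) (antipode_tens_flip s)) (Delta_at (erefl _) r)
  = (eps (tr H (mulgV (a * b)%g) r) : k) *: tens (one a) (one b).
Proof.
pose e0 := esym (invgM a b).
transitivity (tlift (fun p s => tlift (fun p1 p2 => tlift (fun q1 q2 =>
                 tens (mu a p1 (S a q2)) (mu b p2 (S b q1))) (Delta_at e0 s))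
                 (Delta_at (erefl (a * b)%g) p)) (Delta_at (erefl _) r)).
  apply: eq_tlift => p s; rewrite Delta_atE /tmul; apply: eq_tlift => p1 p2.
  rewrite /antipode_tens_flip (tlift_comp _ _ (_ : linear _)); last by linsolve.
  apply: eq_tlift => q1 q2; rewrite tlift_tens //; bilsolve.
rewrite (Delta_at_coassoc _ _ _ (erefl (b * (a * b)^-1)%g) (mulgA a b (a * b)^-1)%g);
  last by bilsolve.
have ea : (b * (a * b)^-1 = a^-1)%g by rewrite invgM mulgA mulgV mul1g.
transitivity (tlift (fun p1 w => tens (mu a p1 (S a (tr H ea w))) (one b))
   (Delta_at (mulgA a b (a * b)^-1)%g r)).
  apply: eq_tlift => p1 w; rewrite Delta_atE.
  by apply: (Delta_antipode_r_absorb _ _ _ _ _ _ (fun q2 y => tens (mu a p1 (S a q2)) y));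
    bilsolve.
have e' : (a * a^-1 = (a * b) * (a * b)^-1)%g by rewrite !mulgV.
rewrite (tlift_Delta_at_tr_r _ ea _ e' r (fun p1 w => tens (mu a p1 (S a w)) (one b))).
rewrite -(tlift_comp _ _ (_ : linear (fun y => tens y (one b)))); last by linsolve.
by rewrite (Delta_at_antipode_r _ (mulgV (a * b)%g)) tensZl.
Qed.

Lemma Delta_antipodeE (q : H ((a * b)^-1)%g) : Delta_antipode q = antipode_tens_flip q.
Proof.
(* Both maps are convolution inverses of Delta_{a,b}: F = F(Delta G) = (F Delta) G = G. *)
set u := (a * b)%g.
have e : (u^-1 * (u * u^-1) = u^-1)%g by rewrite mulgV mulg1.
have e2 : (u^-1 * u * u^-1 = u^-1)%g by rewrite mulVg mul1g.
have hR := tmul_lin_r (mu_bilin a) (mu_bilin b).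
have hL := tmul_lin_l (mu_bilin a) (mu_bilin b).
transitivity (Delta_antipode (tr H (esym (erefl u^-1%g)) q)) => //.
rewrite -(Delta_at_counit_r e (mulgV u) (erefl _) q) (tlift_comp _ _ Delta_antipode_lin).
transitivity (tlift (fun q1 q2 => tlift (fun p s =>
                  mulT (Delta_antipode q1) (mulT (Delta a b p) (antipode_tens_flip s)))
                  (Delta_at (erefl (u * u^-1)%g) q2)) (Delta_at e q)).
  apply: eq_tlift => q1 q2.
  rewrite -(tlift_comp _ _ (hR _)) Delta_antipode_convr (lin_scale (hR _)).
  by rewrite (tmult1 (hc_alg HH a) (hc_alg HH b)) (lin_scale Delta_antipode_lin).
rewrite -(Delta_at_coassoc _ (erefl (u^-1 * u)%g) e2); last by bilsolve.
transitivity (tlift (fun p' r => (eps (tr H (mulVg u) p') : k) *: antipode_tens_flip r)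
                (Delta_at e2 q)).
  apply: eq_tlift => p' r.
  transitivity ((fun y => mulT y (antipode_tens_flip r))
     (tlift (fun q1 p => mulT (Delta_antipode q1) (Delta a b p)) (Delta_at (erefl _) p'))).
    rewrite (tlift_comp _ _ (hL _)); apply: eq_tlift => q1 p.
    by rewrite (tmulA (hc_alg HH a) (hc_alg HH b)).
  by rewrite /= Delta_antipode_convl (lin_scale (hL _)) (tmul1t (hc_alg HH a) (hc_alg HH b)).
transitivity (antipode_tens_flip
   (tlift (fun p' r => (eps (tr H (mulVg u) p') : k) *: r) (Delta_at e2 q))).
  rewrite (tlift_comp _ _ antipode_tens_flip_lin); apply: eq_tlift => p' r.
  by rewrite (lin_scale antipode_tens_flip_lin).
by rewrite (Delta_at_counit_l _ (mulVg u) (erefl _)).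
Qed.

End AntipodeAntiComultiplicative.

Lemma Delta_antipode_cancel (a b d : G) (ed : d = (a * b)%g) (e' : (b * d^-1 = a^-1)%g)
  (w : H (b * d^-1)%g) :
  tlift (fun m1 q => tlift (fun s t => tens s (mu b m1 t)) (Delta a b (tr H ed (S d q))))
    (Delta b d^-1 w)
  = tens (S a (tr H e' w)) (one b).
Proof.
subst d.
transitivity (tlift (fun m1 q => tlift (fun q1 q2 => tens (S a q2) (mu b m1 (S b q1)))
                 (Delta_at (esym (invgM a b)) q)) (Delta b (a * b)^-1%g w)).
  apply: eq_tlift => m1 q.
  rewrite tr_id -/(Delta_antipode a b q) Delta_antipodeE /antipode_tens_flip.
  rewrite (tlift_comp _ _ (_ : linear _)); last by linsolve.
  by apply: eq_tlift => q1 q2; rewrite tlift_tens //; bilsolve.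
by apply: (Delta_antipode_r_absorb _ _ _ _ _ _ (fun q2 y => tens (S a q2) y)); bilsolve.
Qed.

Section HopfModule.
Variables (X : Type) (a : ractType G X) (f : X -> G) (M : X -> lmodType k)
  (mact : forall x, M x -> H (f x) -> M x)
  (rho : forall x g, {linear M (a x g) -> tensor_type (M x) (H g)}).
Hypothesis HM : @is_hopf_module k G H mu one Delta eps X a f M mact rho.

Lemma mact_bilin x : bilinear_map (mact x).
Proof. exact: (hm_mod_bilin HM). Qed.

#[local] Hint Extern 0 => exact: mact_bilin : linearity.

Lemma tr_mact {x y : X} (e : x = y) m h :
  tr M e (mact x m h) = mact y (tr M e m) (tr H (congr1 f e) h).
Proof. by case: y / e. Qed.

Lemma tlift_rho_tr (P : lmodType k) x {g1 g2 : G} (eg : g1 = g2) (m : M (a x g1))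
  (B : M x -> H g2 -> P) :
  tlift (fun p q => B p (tr H eg q)) (rho x g1 m)
  = tlift B (rho x g2 (tr M (congr1 (a x) eg) m)).
Proof. by case: g2 / eg B. Qed.

Lemma rho_coassoc (P : lmodType k) x g h (m : M (a (a x g) h))
  (T : M x -> H g -> H h -> P) :
  trilinear_map T ->
  tlift (fun u r => tlift (fun p q => T p q r) (rho x g u)) (rho (a x g) h m)
  = tlift (fun p w => tlift (fun q r => T p q r) (Delta_at (erefl (g * h)%g) w))
      (rho x (g * h)%g (tr M (ractM a x g h) m)).
Proof.
move=> hT; apply: tlift_coassoc => //; [exact: linearP | exact: Delta_at_lin |].
have -> : Delta_at (erefl (g * h)%g) = Delta g h :> (_ -> _).
  by apply: funext => p; exact: Delta_atE.
exact: (hm_coassoc HM).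
Qed.

Definition base (x : X) : X := a x (f x)^-1%g.

Lemma f_base x : f (base x) = 1%g.
Proof. by rewrite (hm_f HM) mulgV. Qed.

Lemma ract_base x : a (base x) (f x) = x.
Proof. by rewrite (ractM a) mulVg (ract1 a). Qed.

Lemma base_orbit {x} (y : osub (orb a x)) : base (proj1_sig y) = base x.
Proof.
case: y => y /= [g ->].
by rewrite /base (hm_f HM) (ractM a) invgM mulgA mulgV mul1g.
Qed.

Definition proj_at {y u : X} (e : base y = u) (n : M u) : M y :=
  tlift (fun p q => mact y p (S (f y) q)) (rho y (f y)^-1%g (tr M (esym e) n)).

Lemma proj_at_lin {y u} (e : base y = u) : linear (proj_at e).
Proof. rewrite /proj_at; linsolve. Qed.

Lemma rho_proj_at y g {u} (e1 : base (a y g) = u) (e2 : base y = u) (n : M u) :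
  rho y g (proj_at e1 n) = tens (proj_at e2 n) (one g).
Proof.
rewrite /proj_at (tlift_comp _ _ (linearP (rho y g))).
transitivity (tlift (fun p q => tlift (fun m0 m1 => tlift
     (fun s t => tens (mact y m0 s) (mu g m1 t))
     (Delta (f y) g (tr H (hm_f HM y g) (S (f (a y g)) q)))) (rho y g p))
   (rho (a y g) (f (a y g))^-1%g (tr M (esym e1) n))).
  by apply: eq_tlift => p q; exact: (hm_compat HM).
rewrite (rho_coassoc _ _ _ _ _ (fun m0 m1 q => tlift (fun s t => tens (mact y m0 s) (mu g m1 t))
     (Delta (f y) g (tr H (hm_f HM y g) (S (f (a y g)) q))))); last by bilsolve.
have e' : (g * (f (a y g))^-1 = (f y)^-1)%g.
  by rewrite (hm_f HM) invgM mulgA mulgV mul1g.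
transitivity (tlift (fun m0 w => tens (mact y m0 (S (f y) (tr H e' w))) (one g))
   (rho y (g * (f (a y g))^-1)%g (tr M (ractM a y g _) (tr M (esym e1) n)))).
  apply: eq_tlift => m0 w.
  pose Lm := tlift (fun s (t' : H g) => tens (mact y m0 s) t').
  have hLm : linear Lm by rewrite /Lm; linsolve.
  transitivity (Lm (tlift (fun m1 q => tlift (fun s t => tens s (mu g m1 t))
       (Delta (f y) g (tr H (hm_f HM y g) (S (f (a y g)) q)))) (Delta_at (erefl _) w))).
    rewrite (tlift_comp _ _ hLm); apply: eq_tlift => m1 q.
    rewrite (tlift_comp _ _ hLm); apply: eq_tlift => s t.
    by rewrite /Lm tlift_tens //; bilsolve.
  rewrite Delta_atE (Delta_antipode_cancel _ _ _ (hm_f HM y g) e').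
  by rewrite /Lm tlift_tens //; bilsolve.
rewrite (tlift_rho_tr _ y e' _ (fun m0 w => tens (mact y m0 (S (f y) w)) (one g))).
rewrite -(tlift_comp _ _ (tens_lin_l (one g))) !tr_trans.
by rewrite (tr_irrelevance _ (esym e2)).
Qed.

Lemma cval_tr {O : orbits a} (c : coinv one rho O) (y1 y2 : osub O)
  (e : proj1_sig y1 = proj1_sig y2) : cval c y2 = tr M e (cval c y1).
Proof.
case: y1 y2 e => [y1 p1] [y2 p2] /= e.
by case: y2 / e p2 => p2; rewrite (Prop_irrelevance p1 p2).
Qed.

Definition coinv_proj x (n : M (base x)) : coinv one rho (orb a x) :=
  @CoInv _ _ _ _ _ _ one rho (orb a x) (fun y => proj_at (base_orbit y) n)
    (fun y g => rho_proj_at (proj1_sig y) g (base_orbit (oact y g)) (base_orbit y) n).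

Lemma coinv_proj_lin x : linear (coinv_proj x).
Proof. by move=> c n n'; apply: coinv_eq => y /=; rewrite proj_at_lin. Qed.

#[local] Hint Extern 0 => exact: coinv_proj_lin : linearity.

Definition hopf_phi_at x (t : tensor_type (coinv one rho (orb a x)) (H (f x))) : M x :=
  tlift (fun (c : coinv one rho (orb a x)) h => mact x (cval c (xin a x)) h) t.

Definition hopf_phi_inv x (m : M x) : tensor_type (coinv one rho (orb a x)) (H (f x)) :=
  tlift (fun n h => tens (coinv_proj x n) h)
    (rho (base x) (f x) (tr M (esym (ract_base x)) m)).

Lemma hopf_phi_at_bilin x :
  bilinear_map (fun (c : coinv one rho (orb a x)) h => mact x (cval c (xin a x)) h).
Proof.
split=> [h|c]; last exact: (mact_bilin x).2.
by move=> r u v /=; rewrite (mact_bilin x).1.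
Qed.

Lemma hopf_phi_at_lin x : linear (hopf_phi_at x).
Proof. exact: tlift_lin (hopf_phi_at_bilin x). Qed.

Lemma hopf_phi_inv_lin x : linear (hopf_phi_inv x).
Proof. rewrite /hopf_phi_inv; linsolve. Qed.

Lemma hopf_phi_invK x (m : M x) : hopf_phi_at x (hopf_phi_inv x m) = m.
Proof.
set g := f x.
rewrite /hopf_phi_inv (tlift_comp _ _ (hopf_phi_at_lin x)).
transitivity (tlift (fun n h => tlift (fun p q => mact x p (mu g (S g q) h))
                 (rho x g^-1%g n)) (rho (base x) g (tr M (esym (ract_base x)) m))).
  apply: eq_tlift => n h; rewrite /hopf_phi_at tlift_tens; last exact: hopf_phi_at_bilin.
  rewrite /= /proj_at tr_id (tlift_comp _ _ (_ : linear (fun v => mact x v h)));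
    last by linsolve.
  by apply: eq_tlift => p q; rewrite (hm_mod_assoc HM).
rewrite (rho_coassoc _ _ _ _ _ (fun p q h => mact x p (mu g (S g q) h))); last by bilsolve.
transitivity (tlift (fun p w => (eps (tr H (mulVg g) w) : k) *: p)
   (rho x (g^-1 * g)%g (tr M (ractM a x g^-1%g g) (tr M (esym (ract_base x)) m)))).
  apply: eq_tlift => p w.
  rewrite -(tlift_comp _ _ (_ : linear (fun v => mact x p v))); last by linsolve.
  by rewrite (Delta_at_antipode_l _ (mulVg g)) (lin_scale ((mact_bilin x).2 p))
    (hm_mod_unit HM).
rewrite (tlift_rho_tr _ x (mulVg g) _ (fun p w => (eps w : k) *: p)) !tr_trans.
by rewrite (tr_irrelevance _ (esym (ract1 a x))) (hm_counit HM).
Qed.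

Lemma coinv_proj_mact x (c : coinv one rho (orb a x)) (p : H (f (base x))) :
  coinv_proj x (mact _ (cval c (oact (xin a x) (f x)^-1%g)) p)
  = (eps (tr H (f_base x) p) : k) *: c.
Proof.
apply: coinv_eq => yO /=.
set y := proj1_sig yO; set k0 := ((f y)^-1)%g.
have e := base_orbit yO; rewrite -/y in e.
rewrite /proj_at (tr_irrelevance _ (esym e)) tr_mact.
rewrite -(cval_tr c (oact (xin a x) (f x)^-1%g) (oact yO k0) (esym e)).
rewrite (hm_compat HM) (cvalP c yO k0) tlift_tens; last by bilsolve.
set p'' := tr H (hm_f HM y k0) _.
transitivity (tlift (fun s t => mact y (cval c yO) (mu (f y) s (S (f y) t)))
                (Delta (f y) k0 p'')).
  rewrite (tlift_comp _ _ (_ : linear (tlift (fun p q => mact y p (S (f y) q)))));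
    last by linsolve.
  have [_ mul1 _ _] := hc_alg HH k0.
  apply: eq_tlift => s t; rewrite tlift_tens; last by bilsolve.
  by rewrite mul1 (hm_mod_assoc HM).
rewrite -(tlift_comp _ _ (_ : linear (fun v => mact y (cval c yO) v))); last by linsolve.
rewrite -(Delta_atE (erefl _)) (Delta_at_antipode_r _ (mulgV (f y))).
rewrite (lin_scale ((mact_bilin y).2 _)) (hm_mod_unit HM).
by rewrite /p'' !tr_trans (tr_irrelevance _ (f_base x)).
Qed.

Lemma hopf_phi_atK x (t : tensor_type (coinv one rho (orb a x)) (H (f x))) :
  hopf_phi_inv x (hopf_phi_at x t) = t.
Proof.
apply: (@tensor_lin_ext _ _ _ _ (fun t => hopf_phi_inv x (hopf_phi_at x t)) id) => [||c h].
- exact: lin_comp (hopf_phi_inv_lin x) (hopf_phi_at_lin x).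
- exact: lin_id.
set g := f x; have [_ mul1 _ _] := hc_alg HH g.
rewrite /= /hopf_phi_at tlift_tens; last exact: hopf_phi_at_bilin.
rewrite /hopf_phi_inv tr_mact.
rewrite -(cval_tr c (xin a x) (oact (oact (xin a x) g^-1%g) g) (esym (ract_base x))).
rewrite (hm_compat HM) (cvalP c (oact (xin a x) g^-1%g) g) tlift_tens; last by bilsolve.
set h' := tr H (hm_f HM (base x) g) (tr H (congr1 f (esym (ract_base x))) h).
transitivity (tlift (fun p q => tens ((eps (tr H (f_base x) p) : k) *: c) q)
                (Delta (f (base x)) g h')).
  rewrite (tlift_comp _ _ (_ : linear (tlift (fun n h => tens (coinv_proj x n) h))));
    last by linsolve.
  apply: eq_tlift => p q; rewrite tlift_tens; last by bilsolve.
  by rewrite mul1 coinv_proj_mact.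
transitivity (tens c (tlift (fun p q => (eps (tr H (f_base x) p) : k) *: q)
                (Delta_at (erefl (f (base x) * g)%g) h'))).
  rewrite (tlift_comp _ _ (tens_lin_r c)) Delta_atE; apply: eq_tlift => p q.
  by rewrite tensZl tensZr.
have e2 : g = (f (base x) * g)%g by rewrite f_base mul1g.
by rewrite (Delta_at_counit_l _ (f_base x) e2) !tr_trans tr_id.
Qed.

Definition index_inv (z : orbits a * G) : X :=
  a (orbit_rep z.1) ((f (orbit_rep z.1))^-1 * z.2)%g.

Lemma index_invK z : (orb a (index_inv z), f (index_inv z)) = z.
Proof.
case: z => [[O hO] g]; rewrite /index_inv /=; congr pair; last first.
  by rewrite (hm_f HM) mulVKg.
apply: eq_exist_uncurried; exists (etrans (orbit_ract _ _) (esym (orbit_repP _))).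
exact: Prop_irrelevance.
Qed.

Lemma index_inv_orb x : index_inv (orb a x, f x) = x.
Proof.
have : Defs.orbit a (orbit_rep (orb a x)) x by rewrite -orbit_repP; exists 1%g; rewrite (ract1 a).
by case=> g0 E; rewrite /index_inv /= {3 4}E (hm_f HM) mulKg -E.
Qed.

Lemma hopf_phi_at_tr x' x (d : x' = x) (e : (orb a x', f x') = (orb a x, f x)) (m : M x') :
  tr M d m = hopf_phi_at x (tr (coinvH one rho) e (hopf_phi_inv x' m)).
Proof. by case: x / d e => e; rewrite (Prop_irrelevance e erefl) /= hopf_phi_invK. Qed.

Lemma hopf_phi_iso : tiso (hopf_phi one mact rho).
Proof.
split; first exact: hopf_phi_at_lin.
pose phi_inv : tmor M (coinvH one rho) := existT _ index_inv
  (fun z m => tr (coinvH one rho) (index_invK z) (hopf_phi_inv (index_inv z) m)).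
exists phi_inv; split; [|split].
- by move=> z /=; apply: (lin_comp (tr_lin _)); exact: hopf_phi_inv_lin.
- rewrite /tcomp /tid.
  apply: (@tmor_eq _ _ _ (coinvH one rho) (coinvH one rho) _ id _ _ index_invK) => z m /=.
  by rewrite hopf_phi_atK.
- rewrite /tcomp /tid.
  by apply: (@tmor_eq _ _ _ M M _ id _ _ index_inv_orb) => x m /=; exact: hopf_phi_at_tr.
Qed.

End HopfModule.

End HopfGCoalgebra.

Theorem theorem3p3 (k : comPzRingType) (G : groupType)
  (H : G -> lmodType k) (mu : forall g, H g -> H g -> H g) (one : forall g, H g)
  (Delta : forall g h : G, {linear H (g * h)%g -> tensor_type (H g) (H h)})
  (eps : {linear H 1%g -> GRing.regular k})
  (S : forall g : G, {linear H (g^-1)%g -> H g})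
  (HH : @is_hopf_G_coalgebra k G H mu one Delta eps S)
  (X : Type) (a : ractType G X) (f : X -> G) (M : X -> lmodType k)
  (mact : forall x, M x -> H (f x) -> M x)
  (rho : forall x g, {linear M (a x g) -> tensor_type (M x) (H g)})
  (HM : @is_hopf_module k G H mu one Delta eps X a f M mact rho) :
  tiso (@hopf_phi k G H one X a f M mact rho).
Proof. exact: (@hopf_phi_iso k G H mu one Delta eps S HH X a f M mact rho HM). Qed.
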